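(* Let $L$ be a sublattice of $A_2$ of rank $2$. Then there exist $b_0,b_1\in L$ forming a basis of $L$ such that, with $b_2=-b_0-b_1$, the $3\times3$ matrix with rows $b_0,b_1,b_2$ has all off-diagonal entries $\le 0$. (Equivalently, $L$ is the Laplacian lattice of a regular digraph on three vertices.)
   Context: $A_2=\{x\in\mathbb Z^3:x_0+x_1+x_2=0\}$. A regular digraph is a directed multigraph in which each vertex has equal in-degree and out-degree; its Laplacian lattice is the lattice generated by the rows of its Laplacian matrix, which has the out-degrees on the diagonal and $-($number of arcs between the corresponding vertices$)$ off the diagonal. *)

From HB Require Import structures.
From mathcomp Require Import all_boot all_order all_algebra.
Set Implicit Arguments. Unset Strict Implicit. Unset Printing Implicit Defensive.
Import Order.TTheory GRing.Theory Num.Theory.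
Local Open Scope ring_scope.

Definition vec3 := 'rV[int]_3.

Definition inA2 (x : vec3) : Prop := x 0 0 + x 0 1 + x 0 2 = 0.

Definition is_subgroup (L : vec3 -> Prop) : Prop :=
  L 0 /\ (forall x y, L x -> L y -> L (x - y)).

Definition sublattice_A2 (L : vec3 -> Prop) : Prop :=
  is_subgroup L /\ (forall x, L x -> inA2 x).

Definition Zindep2 (u v : vec3) : Prop :=
  forall a b : int, a *: u + b *: v = 0 -> a = 0 /\ b = 0.

Definition Zindep3 (u v w : vec3) : Prop :=
  forall a b c : int, a *: u + b *: v + c *: w = 0 -> [/\ a = 0, b = 0 & c = 0].

Definition rank2 (L : vec3 -> Prop) : Prop :=
  (exists u v, [/\ L u, L v & Zindep2 u v]) /\
  ~ (exists u v w, [/\ L u, L v, L w & Zindep3 u v w]).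

Definition is_basis2 (L : vec3 -> Prop) (b0 b1 : vec3) : Prop :=
  [/\ L b0, L b1, Zindep2 b0 b1 &
      forall x, L x -> exists a b : int, x = a *: b0 + b *: b1].

Definition rows3 (b0 b1 : vec3) : 'M[int]_3 :=
  \matrix_(i < 3, j < 3)
    (if (i == 0 :> nat) then b0 0 j
     else if (i == 1 :> nat) then b1 0 j
     else (- b0 - b1) 0 j).

From HB Require Import structures.
From mathcomp Require Import all_boot all_order all_algebra zify.
From Stdlib Require Import Classical Wf_nat.
Set Implicit Arguments. Unset Strict Implicit. Unset Printing Implicit Defensive.
Import Order.TTheory GRing.Theory Num.Theory.
Local Open Scope ring_scope.

(* Projection to the first two coordinates is injective on A_2, so L has an
   echelon basis u = (A, B, _), v = (0, C, _) with A, C > 0.  Writing the first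
   two coordinates of the wanted basis b0, b1 as (x, -y) and (-z, w), the sign
   condition on the 3x3 matrix reads 0 <= y <= x, 0 <= z <= w, z <= x, y <= w.
   After reducing B modulo C only y <= x can fail, and a Euclid-like descent by
   unimodular row operations, with ceiling quotients, decreases y until it
   holds. *)

Lemma ex_least_nat (P : nat -> Prop) :
  (exists n, P n) -> exists n, P n /\ forall m, P m -> (n <= m)%N.
Proof.
move=> /(dec_inh_nat_subset_has_unique_least_element _ (fun n => classic (P n))).
by case=> n [[Pn n_min] _]; exists n; split => // m /n_min /ssrnat.leP.
Qed.

Lemma ord3P (j : 'I_3) : [\/ j = 0, j = 1 | j = 2].
Proof.
by case: j => [[|[|[|//]]] ?]; [constructor 1 | constructor 2 | constructor 3];
  apply: val_inj.
Qed.

Lemma coordD (x y : vec3) j : (x + y) 0 j = x 0 j + y 0 j.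
Proof. by rewrite mxE. Qed.

Lemma coordN (x : vec3) j : (- x) 0 j = - x 0 j.
Proof. by rewrite mxE. Qed.

Lemma coordZ (a : int) (x : vec3) j : (a *: x) 0 j = a * x 0 j.
Proof. by rewrite mxE. Qed.

Lemma coord0 j : (0 : vec3) 0 j = 0.
Proof. by rewrite mxE. Qed.

Definition coordE := (coordD, coordN, coordZ, coord0).

Section Subgroup.
Variable L : vec3 -> Prop.
Hypothesis L_subgroup : is_subgroup L.

Lemma subgroup0 : L 0.
Proof. by case: L_subgroup. Qed.

Lemma subgroupB x y : L x -> L y -> L (x - y).
Proof. by case: L_subgroup => _; apply. Qed.

Lemma subgroupN x : L x -> L (- x).
Proof. by move=> Lx; rewrite -sub0r; apply: subgroupB => //; apply: subgroup0. Qed.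

Lemma subgroupD x y : L x -> L y -> L (x + y).
Proof. by move=> Lx Ly; rewrite -[y]opprK; apply/subgroupB/subgroupN. Qed.

Lemma subgroupZ (k : int) x : L x -> L (k *: x).
Proof.
move=> Lx; elim/int_rec: k => [|n IHn|n IHn]; first by rewrite scale0r; apply: subgroup0.
  by rewrite intS scalerDl scale1r; apply: subgroupD.
by rewrite intS opprD scalerDl scaleN1r; apply: subgroupD => //; apply: subgroupN.
Qed.

Lemma subgroup_comb (a b : int) x y : L x -> L y -> L (a *: x + b *: y).
Proof. by move=> Lx Ly; apply/subgroupD/subgroupZ; first apply: subgroupZ. Qed.

(* u has the least positive j-th coordinate in L; division with remainder does the rest. *)
Lemma subgroup_coord_generator (j : 'I_3) :
  (exists x, L x /\ x 0 j != 0) ->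
  exists2 u, L u /\ 0 < u 0 j & forall x, L x -> exists k : int, (x - k *: u) 0 j = 0.
Proof.
move=> [x [Lx xj]].
have [n [[u [Lu un]] n_min]] : exists n, (exists u, L u /\ u 0 j = n.+1%:Z) /\
    forall m, (exists u, L u /\ u 0 j = m.+1%:Z) -> (n <= m)%N.
  apply: ex_least_nat; exists (absz (x 0 j)).-1.
  move: xj; rewrite neq_lt => /orP[xj_neg|xj_pos].
    by exists (- x); split; [exact: subgroupN | rewrite coordE; lia].
  by exists x; split => //; lia.
exists u; first by split => //; rewrite un.
move=> y Ly; exists (divz (y 0 j) (u 0 j)); set r : vec3 := y - _ *: u.
have Lr : L r by apply: subgroupB => //; apply: subgroupZ.
have uj0 : u 0 j != 0 by rewrite un.
have rj : r 0 j = modz (y 0 j) (u 0 j).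
  by rewrite !coordE; have := divz_eq (y 0 j) (u 0 j); lia.
have := modz_ge0 (y 0 j) uj0; have := ltz_mod (y 0 j) uj0; rewrite -rj => rj_lt rj_ge.
have [//|rj_nz] := eqVneq (r 0 j) 0.
suff /n_min : exists v, L v /\ v 0 j = (absz (r 0 j)).-1.+1%:Z by lia.
by exists r; split => //; lia.
Qed.

End Subgroup.

Lemma A2_coord2 (x : vec3) : inA2 x -> x 0 2 = - x 0 0 - x 0 1.
Proof. by rewrite /inA2; lia. Qed.

Lemma A2_comb (a b : int) (u v : vec3) : inA2 u -> inA2 v -> inA2 (a *: u + b *: v).
Proof. by move=> /A2_coord2 u2 /A2_coord2 v2; rewrite /inA2 !coordE u2 v2; lia. Qed.

Lemma A2_eq0 (x : vec3) : inA2 x -> x 0 0 = 0 -> x 0 1 = 0 -> x = 0.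
Proof.
move=> /A2_coord2 x2 x0 x1; apply/rowP => j; rewrite coord0.
by case: (ord3P j) => ->; lia.
Qed.

Lemma A2_indep_minor (u v : vec3) : inA2 u -> inA2 v -> Zindep2 u v ->
  u 0 0 * v 0 1 - u 0 1 * v 0 0 != 0.
Proof.
move=> Au Av indep.
(* A vanishing minor makes v01 u - u01 v, then v00 u - u00 v, and finally u vanish. *)
have vanish (a b : int) : a * u 0 0 + b * v 0 0 = 0 -> a * u 0 1 + b * v 0 1 = 0 ->
    a = 0 /\ b = 0.
  by move=> e0 e1; apply: indep; apply: A2_eq0; rewrite ?coordE //; apply: A2_comb.
have := vanish (v 0 1) (- u 0 1); have := vanish (v 0 0) (- u 0 0).
by have := vanish 1 0; lia.
Qed.

(* [[x, -y], [-z, w]] is the upper-left block of a 3x3 matrix with zero row and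
   column sums and nonpositive off-diagonal entries. *)
Definition laplacian_minor (x y z w : int) : Prop :=
  0 <= y <= x /\ 0 <= z <= w /\ z <= x /\ y <= w.

(* If y > x, the rows (x, y), (z, w) become (m x - z, m y - w), (x, y) with
   m = ceil (w / y), which preserves the hypotheses and decreases y; when w = y
   a single reduction modulo x - z finishes instead. *)
Lemma laplacian_minor_descent (n : nat) (x y z w : int) :
  y <= n%:Z -> 0 <= z <= x -> 0 <= y <= w -> z <= w -> 0 < x * w - y * z ->
  exists p q r s, p * s - q * r = 1 /\
    laplacian_minor (p * x + q * z) (p * y + q * w) (r * x + s * z) (r * y + s * w).
Proof.
rewrite /laplacian_minor.
elim: n x y z w => [|n IHn] x y z w yn zx yw zw det;
  have [yx|xy] := lerP y x; try by exists 1, 0, 0, 1; lia.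
have [wy|wy] := eqVneq w y.
  subst w.
  have xz : x - z != 0 by lia.
  have := divz_eq z (x - z); have := modz_ge0 z xz; have := ltz_mod z xz.
  set k := (z %/ (x - z))%Z; set c := (z %% (x - z))%Z => c_lt c_ge z_eq.
  by exists 1, (-1), (- k), (1 + k); lia.
have y0 : y != 0 by lia.
have := divz_eq (w - 1) y; have := modz_ge0 (w - 1) y0; have := ltz_mod (w - 1) y0.
set k := ((w - 1) %/ y)%Z; set c := ((w - 1) %% y)%Z => c_lt c_ge w_eq.
have k1 : 1 <= k by nia.
have kx : x <= k * x by nia.
case: (IHn ((k + 1) * x - z) ((k + 1) * y - w) x y); try lia.
move=> p [q [r [s [ps lap]]]].
by exists (p * (k + 1) + q), (- p), (r * (k + 1) + s), (- r); lia.
Qed.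

Lemma laplacian_minor_exists (a b c : int) : 0 < a -> 0 < c ->
  exists p q r s, p * s - q * r = 1 /\
    laplacian_minor (p * a) (p * b + q * c) (r * a) (r * b + s * c).
Proof.
move=> a_pos c_pos; have c0 : c != 0 by lia.
have := divz_eq b c; have := modz_ge0 b c0; have := ltz_mod b c0.
set k := divz b c; set d := modz b c => d_lt d_ge b_eq.
have [|||||p [q [r [s [ps lap]]]]] := @laplacian_minor_descent (absz d) a d 0 c.
all: try lia.
by exists p, (q - p * k), r, (s - r * k); move: lap; rewrite /laplacian_minor; lia.
Qed.

Lemma is_basis2_unimodular (L : vec3 -> Prop) (u v : vec3) (p q r s : int) :
  is_subgroup L -> is_basis2 L u v -> p * s - q * r = 1 ->
  is_basis2 L (p *: u + q *: v) (r *: u + s *: v).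
Proof.
move=> L_subgroup [Lu Lv indep span] det; split; try exact: subgroup_comb.
  move=> a b e.
  have [e1 e2] : a * p + b * r = 0 /\ a * q + b * s = 0.
    by apply: indep; apply: etrans e; apply/rowP => j; rewrite !coordE; lia.
  have ha : a = s * (a * p + b * r) - r * (a * q + b * s).
    have : a * (p * s - q * r) = a by rewrite det mulr1.
    lia.
  have hb : b = p * (a * q + b * s) - q * (a * p + b * r).
    have : b * (p * s - q * r) = b by rewrite det mulr1.
    lia.
  by split; [rewrite ha | rewrite hb]; rewrite e1 e2 !mulr0 subr0.
move=> x /span [a [b ->]]; exists (a * s - b * r), (b * p - a * q).
apply/rowP => j; rewrite !coordE.
have -> : a * u 0 j + b * v 0 j = (a * u 0 j + b * v 0 j) * (p * s - q * r).
  by rewrite det mulr1.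
by lia.
Qed.

Lemma sublattice_A2_echelon_basis (L : vec3 -> Prop) :
  sublattice_A2 L -> (exists u v, [/\ L u, L v & Zindep2 u v]) ->
  exists u v, [/\ is_basis2 L u v, 0 < u 0 0, v 0 0 = 0 & 0 < v 0 1].
Proof.
move=> [L_subgroup L_A2] [w0 [w1 [Lw0 Lw1 indep]]].
have minor := A2_indep_minor (L_A2 _ Lw0) (L_A2 _ Lw1) indep.
have L_coord0 : exists x, L x /\ x 0 0 != 0.
  have [w00|w00] := eqVneq (w0 0 0) 0; last by exists w0.
  by exists w1; split => //; move: minor; rewrite w00; lia.
have [u [Lu u_pos] u_gen] := subgroup_coord_generator L_subgroup L_coord0.
pose L0 x := L x /\ x 0 0 = 0.
have L0_subgroup : is_subgroup L0.
  split; first by split; [apply: subgroup0 | rewrite coord0].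
  by move=> x y [Lx x0] [Ly y0]; split; [apply: subgroupB | rewrite !coordE x0 y0 subr0].
have L0_coord1 : exists x, L0 x /\ x 0 1 != 0.
  exists (w1 0 0 *: w0 + (- w0 0 0) *: w1); rewrite /L0 !coordE.
  by split; [split; [apply: subgroup_comb | lia] | lia].
have [v [[Lv v0] v_pos] v_gen] := subgroup_coord_generator L0_subgroup L0_coord1.
exists u, v; split => //; split => //.
  move=> a b e.
  have e0 : a * u 0 0 = 0 by move/rowP/(_ 0): e; rewrite !coordE v0; lia.
  have e1 : a * u 0 1 + b * v 0 1 = 0 by move/rowP/(_ 1): e; rewrite !coordE.
  have a0 : a = 0 by apply/eqP; move/eqP: e0; rewrite mulf_eq0 (gt_eqF u_pos) orbF.
  move: e1; rewrite a0 mul0r add0r => /eqP; rewrite mulf_eq0 (gt_eqF v_pos) orbF.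
  by move/eqP.
move=> x Lx; have [a xa] := u_gen x Lx.
have L0x : L0 (x - a *: u) by split => //; apply: subgroupB => //; apply: subgroupZ.
have [b xb] := v_gen _ L0x.
exists a, b; apply/eqP; rewrite -subr_eq0 opprD addrA; apply/eqP/A2_eq0.
- by apply: L_A2; apply: subgroupB => //; [case: L0x | apply: subgroupZ].
- by move: xa; rewrite !coordE v0; lia.
- exact: xb.
Qed.

Lemma rows3_offdiag_nonpos (b0 b1 : vec3) : inA2 b0 -> inA2 b1 ->
  laplacian_minor (b0 0 0) (- b0 0 1) (- b1 0 0) (b1 0 1) ->
  forall i j : 'I_3, i != j -> rows3 b0 b1 i j <= 0.
Proof.
move=> /A2_coord2 b02 /A2_coord2 b12; rewrite /laplacian_minor => lap i j.
by rewrite /rows3 mxE; case: (ord3P i) => ->; case: (ord3P j) => -> //= _;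
  rewrite ?coordE ?b02 ?b12; lia.
Qed.

Theorem mainTheorem17 (L : vec3 -> Prop) :
  sublattice_A2 L -> rank2 L ->
  exists b0 b1 : vec3, is_basis2 L b0 b1 /\
    (forall i j : 'I_3, i != j -> rows3 b0 b1 i j <= 0).
Proof.
move=> L_A2 [indep _]; have [L_subgroup L_inA2] := L_A2.
have [u [v [uv_basis u_pos v0 v_pos]]] := sublattice_A2_echelon_basis L_A2 indep.
have [p [q [r [s [det lap]]]]] := laplacian_minor_exists (- u 0 1) u_pos v_pos.
have b_basis : is_basis2 L (p *: u + (- q) *: v) ((- r) *: u + s *: v).
  by apply: is_basis2_unimodular => //; lia.
exists (p *: u + (- q) *: v), ((- r) *: u + s *: v); split => //.
have [Lb0 Lb1 _ _] := b_basis.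
apply: rows3_offdiag_nonpos; [exact: L_inA2 Lb0 | exact: L_inA2 Lb1 |].
by move: lap; rewrite /laplacian_minor !coordE v0; lia.
Qed.
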